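(* Let $q$ be a query user, let $\sigma>0$, and let $e$ be a set of users (an index node). Let $rpiv_1,\dots,rpiv_l$ be road-network pivot locations. For a user $u$ and pivot $rpiv_k$ let $a(u,k)=\frac{1}{|u.L|}\sum_{i=1}^{|u.L|} dist_{RN}(u.loc_i, rpiv_k)$, and let $lb_k(e)=\min_{u\in e}a(u,k)$, $ub_k(e)=\max_{u\in e}a(u,k)$. Define $lb\_dist_{RN}(S,e)=\max_{k=1}^{l} c_k$, where $c_k = lb_k(e)-a(q,k)$ if $a(q,k)<lb_k(e)$, $c_k=a(q,k)-ub_k(e)$ if $a(q,k)>ub_k(e)$, and $c_k=0$ otherwise. If $lb\_dist_{RN}(S,e)>\sigma$, then for every spatial-social $(k',d,\sigma,\theta)$-truss $S$ containing $q$ (for any parameters $k',d,\theta$ and query topic vector) no user of $e$ belongs to $S$.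
   Context: Users of a social network $G_s$ each have a finite nonempty set of check-in locations $u.loc_1,\dots,u.loc_{|u.L|}$ on a road network (undirected weighted graph) with shortest-path distance $dist_{RN}$. The average spatial distance is $avg\_dist_{RN}(u,v)=\frac{1}{|u.L||v.L|}\sum_i\sum_j dist_{RN}(u.loc_i,v.loc_j)$. $dist_{SN}(u,v)$ is the hop distance in $G_s$; the support of an edge in a subgraph $H$ is the number of triangles of $H$ containing it. A connected subgraph $S$ is a $(k',d)$-truss if every edge of $S$ has support in $S$ at least $k'-2$ and $dist_{SN}(u,v)<d$ for all $u,v\in V(S)$. Each edge $e_{a,b}$ carries topic probabilities $tp^j_{a,b}$; for a query topic vector $\mathcal{T}_q$ the influence of a path $a_1\to\dots\to a_m$ is $\prod_{i}\sum_j tp^j_{a_i,a_{i+1}}\mathcal{T}_q^j$. A spatial-social $(k',d,\sigma,\theta)$-truss is a user set $S$ that is a $(k',d)$-truss, satisfies $avg\_dist_{RN}(u,v)<\sigma$ for all $u,v\in S$, and such that for all $u,v\in S$ some path from $u$ to $v$ within $S$ has influence at least $\theta$. *)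

From HB Require Import structures.
From mathcomp Require Import all_boot all_order all_algebra.
Set Implicit Arguments. Unset Strict Implicit. Unset Printing Implicit Defensive.
Import Order.TTheory GRing.Theory Num.Theory.
Local Open Scope ring_scope.

Section RoadNetwork.
Variables (R : realFieldType) (V : finType).

Definition pweight (w : V -> V -> R) (x : V) (p : seq V) : R :=
  \sum_(ij <- zip (x :: p) p) w ij.1 ij.2.

Definition is_sp_dist (eRN : rel V) (w : V -> V -> R) (dist : V -> V -> R) :=
  forall x y,
    (exists2 p : seq V, path eRN x p && (last x p == y) & pweight w x p = dist x y)
    /\ (forall p : seq V, path eRN x p -> last x p = y -> dist x y <= pweight w x p).

Definition avg_dist (dist : V -> V -> R) (Lu Lv : {set V}) : R :=
  (#|Lu|%:R * #|Lv|%:R)^-1 * \sum_(x in Lu) \sum_(y in Lv) dist x y.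

Definition avg_piv (dist : V -> V -> R) (Lu : {set V}) (p : V) : R :=
  (#|Lu|%:R)^-1 * \sum_(x in Lu) dist x p.
End RoadNetwork.

Section Social.
Variables (R : realFieldType) (U : finType).

(* Hop distance in the social graph G: None = infinite (unreachable). *)
Definition reachn (G : rel U) (n : nat) (u v : U) : bool :=
  [exists p : n.-tuple U, path G u p && (last u p == v)].

Definition hop_dist (G : rel U) (u v : U) : option nat :=
  if connect G u v then Some (find (fun n => reachn G n u v) (iota 0 #|U|))
  else None.

Definition hop_dist_lt (G : rel U) (u v : U) (d : nat) : bool :=
  if hop_dist G u v is Some n then (n < d)%N else false.

Definition induced (G : rel U) (S : {set U}) : rel U :=
  fun x y => [&& G x y, x \in S & y \in S].

Definition support (G : rel U) (S : {set U}) (u v : U) : nat :=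
  #|[set w in S | G u w && G v w]|.

Definition influence (m : nat) (tp : U -> U -> 'I_m -> R) (Tq : 'I_m -> R)
    (x : U) (p : seq U) : R :=
  \prod_(ij <- zip (x :: p) p) \sum_(j < m) tp ij.1 ij.2 j * Tq j.

Definition is_truss (G : rel U) (S : {set U}) (k' d : nat) : Prop :=
  (forall u v, u \in S -> v \in S -> connect (induced G S) u v) /\
  (forall u v, u \in S -> v \in S -> G u v -> (k' - 2 <= support G S u v)%N) /\
  (forall u v, u \in S -> v \in S -> hop_dist_lt G u v d).

Definition is_ss_truss (V : finType) (G : rel U) (dist : V -> V -> R)
    (L : U -> {set V}) (m : nat) (tp : U -> U -> 'I_m -> R) (Tq : 'I_m -> R)
    (S : {set U}) (k' d : nat) (sigma theta : R) : Prop :=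
  is_truss G S k' d /\
  (forall u v, u \in S -> v \in S -> avg_dist dist (L u) (L v) < sigma) /\
  (forall u v, u \in S -> v \in S ->
     exists p : seq U, [/\ path (induced G S) u p, last u p = v &
                           theta <= influence tp Tq u p]).
End Social.

(* lb_k(e), ub_k(e): min / max over the (nonempty) set e; 0 if e is empty *)
Definition set_min (R : realFieldType) (U : finType) (f : U -> R) (e : {set U}) : R :=
  if [pick u in e] is Some u0 then \big[Num.min/f u0]_(u in e) f u else 0.
Definition set_max (R : realFieldType) (U : finType) (f : U -> R) (e : {set U}) : R :=
  if [pick u in e] is Some u0 then \big[Num.max/f u0]_(u in e) f u else 0.

(* lb_dist_RN(S,e) = max_k c_k, all c_k >= 0 *)
Definition lb_dist (R : realFieldType) (U V : finType) (dist : V -> V -> R)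
    (L : U -> {set V}) (l : nat) (piv : 'I_l -> V) (q : U) (e : {set U}) : R :=
  \big[Num.max/0]_(k < l)
    (let aq := avg_piv dist (L q) (piv k) in
     let lbk := set_min (fun u => avg_piv dist (L u) (piv k)) e in
     let ubk := set_max (fun u => avg_piv dist (L u) (piv k)) e in
     if aq < lbk then lbk - aq else if ubk < aq then aq - ubk else 0).

(* The triangle inequality of the shortest-path distance, averaged over all
   pairs of locations, gives a(u,k) - a(v,k) <= avg_dist(u,v) for any users
   u, v; so |a(q,k) - a(u,k)| < sigma whenever q and u both lie in S. If
   moreover u is in e, then a(u,k) lies in [lb_k(e), ub_k(e)], and the
   distance c_k from a(q,k) to that interval is at most |a(q,k) - a(u,k)|.
   Hence every c_k, and therefore lb_dist, is below sigma. *)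

From HB Require Import structures.
From mathcomp Require Import all_boot all_order all_algebra.
From mathcomp Require Import lra.
Set Implicit Arguments.
Unset Strict Implicit.
Unset Printing Implicit Defensive.
Import Order.TTheory GRing.Theory Num.Theory.
Local Open Scope ring_scope.

Section ShortestPaths.
Variables (R : realFieldType) (V : finType) (eRN : rel V) (w : V -> V -> R).

Lemma pweight_cat x p1 p2 :
  pweight w x (p1 ++ p2) = pweight w x p1 + pweight w (last x p1) p2.
Proof.
elim: p1 x => [|a p1 IH] x /=; first by rewrite /pweight /= big_nil add0r.
by rewrite /pweight /= !big_cons -/(pweight w a _) IH /pweight addrA.
Qed.

Lemma sp_dist_triangle dist : is_sp_dist eRN w dist ->
  forall x y z, dist x z <= dist x y + dist y z.
Proof.
move=> sp x y z.
have [[p1 /andP[path1 /eqP last1] <-] _] := sp x y.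
have [[p2 /andP[path2 /eqP last2] <-] _] := sp y z.
have [_ /(_ (p1 ++ p2))] := sp x z.
by rewrite cat_path path1 last1 path2 last_cat last1 last2 pweight_cat last1; apply.
Qed.

End ShortestPaths.

Section Averages.
Variables (R : realFieldType) (V : finType).

Lemma mean_pair_sum_l (f : V -> R) (A B : {set V}) : B != set0 ->
  #|A|%:R^-1 * \sum_(x in A) f x =
  (#|A|%:R * #|B|%:R)^-1 * \sum_(x in A) \sum_(y in B) f x.
Proof.
move=> B_neq0.
have B_card_neq0 : (#|B|%:R : R) != 0 by rewrite pnatr_eq0 -lt0n card_gt0.
under [X in _ = _ * X]eq_bigr do rewrite sumr_const.
by rewrite sumrMnl -(mulr_natr (\sum_(x in A) f x)) invfM mulrACA mulVf ?mulr1.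
Qed.

Lemma mean_pair_sum_r (f : V -> R) (A B : {set V}) : A != set0 ->
  #|B|%:R^-1 * \sum_(y in B) f y =
  (#|A|%:R * #|B|%:R)^-1 * \sum_(x in A) \sum_(y in B) f y.
Proof.
move=> A_neq0.
have A_card_neq0 : (#|A|%:R : R) != 0 by rewrite pnatr_eq0 -lt0n card_gt0.
rewrite sumr_const -(mulr_natr (\sum_(y in B) f y)) [_ * #|B|%:R]mulrC invfM.
by rewrite mulrACA mulVf ?mulr1.
Qed.

Variable dist : V -> V -> R.
Hypothesis dist_triangle : forall x y z, dist x z <= dist x y + dist y z.

Lemma avg_piv_sub_le_avg_dist (A B : {set V}) p : A != set0 -> B != set0 ->
  avg_piv dist A p - avg_piv dist B p <= avg_dist dist A B.
Proof.
move=> A_neq0 B_neq0.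
rewrite /avg_piv (mean_pair_sum_l _ _ B_neq0) (mean_pair_sum_r _ _ A_neq0).
rewrite -mulrBr -sumrB.
under eq_bigr do rewrite -sumrB.
rewrite /avg_dist ler_wpM2l ?invr_ge0 ?mulr_ge0 ?ler0n //.
apply: ler_sum => x _; apply: ler_sum => y _.
by rewrite lerBlDr; apply: dist_triangle.
Qed.

Lemma norm_avg_piv_sub_le (A B : {set V}) p : A != set0 -> B != set0 ->
  `|avg_piv dist A p - avg_piv dist B p| <=
  Num.max (avg_dist dist A B) (avg_dist dist B A).
Proof.
move=> A_neq0 B_neq0.
have le_AB := avg_piv_sub_le_avg_dist p A_neq0 B_neq0.
have le_BA := avg_piv_sub_le_avg_dist p B_neq0 A_neq0.
by rewrite ler_norml lerNl opprB !le_max le_AB le_BA orbT.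
Qed.

End Averages.

Section Bounds.
Variable R : realFieldType.

Lemma set_min_le (U : finType) (f : U -> R) (e : {set U}) u :
  u \in e -> set_min f e <= f u.
Proof.
move=> ue; rewrite /set_min; case: pickP => [u0 _|/(_ u)]; last by rewrite ue.
exact: bigmin_le_cond.
Qed.

Lemma set_max_ge (U : finType) (f : U -> R) (e : {set U}) u :
  u \in e -> f u <= set_max f e.
Proof.
move=> ue; rewrite /set_max; case: pickP => [u0 _|/(_ u)]; last by rewrite ue.
exact: le_bigmax_cond.
Qed.

(* The summand c_k of [lb_dist] is [interval_gap lb_k ub_k a(q,k)] up to conversion. *)
Definition interval_gap (lb ub x : R) : R :=
  if x < lb then lb - x else if ub < x then x - ub else 0.

Lemma interval_gap_le_dist (lb ub x y : R) :
  lb <= y -> y <= ub -> interval_gap lb ub x <= `|x - y|.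
Proof.
move=> lb_y y_ub; have := ler_norm (x - y); have := ler_norm (y - x).
rewrite distrC /interval_gap; case: ifP => _; first lra.
by case: ifP => _; lra.
Qed.

End Bounds.

Lemma lb_dist_lt (R : realFieldType) (U V : finType) (dist : V -> V -> R)
    (L : U -> {set V}) (l : nat) (piv : 'I_l -> V) (q : U) (e : {set U}) u s :
  0 < s -> u \in e ->
  (forall k, `|avg_piv dist (L q) (piv k) - avg_piv dist (L u) (piv k)| < s) ->
  lb_dist dist L piv q e < s.
Proof.
move=> s_gt0 ue near_q.
apply: (big_ind (fun x => x < s)) => // [x y|k _]; first by rewrite gt_max => ->.
apply: le_lt_trans (near_q k).
apply: interval_gap_le_dist; first exact: set_min_le.
exact: (set_max_ge (fun v => avg_piv dist (L v) (piv k))).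
Qed.

Theorem lemma6 (R : realFieldType)
    (V : finType) (eRN : rel V) (w : V -> V -> R) (distRN : V -> V -> R)
    (U : finType) (G : rel U) (L : U -> {set V})
    (m : nat) (tp : U -> U -> 'I_m -> R)
    (l : nat) (piv : 'I_l -> V) (q : U) (sigma : R) (e : {set U}) :
  symmetric eRN -> (forall x y, w x y = w y x) -> (forall x y, 0 <= w x y) ->
  is_sp_dist eRN w distRN ->
  symmetric G -> irreflexive G ->
  (forall u, L u != set0) ->
  0 < sigma ->
  lb_dist distRN L piv q e > sigma ->
  forall (k' d : nat) (theta : R) (Tq : 'I_m -> R) (S : {set U}),
    is_ss_truss G distRN L tp Tq S k' d sigma theta ->
    q \in S ->
    forall u, u \in e -> u \notin S.
Proof.
move=> _ _ _ sp _ _ L_neq0 sigma_gt0 lb_gt k' d theta Tq S [_ [avg_lt _]] qS u ue.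
apply: (contraTN _ lb_gt) => uS; rewrite -leNgt ltW //.
apply: (lb_dist_lt sigma_gt0 ue) => k.
apply: le_lt_trans (norm_avg_piv_sub_le (sp_dist_triangle sp) _ (L_neq0 q) (L_neq0 u)) _.
by rewrite gt_max !avg_lt.
Qed.
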